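(* Let $d \geq 2$ and let $\Gamma \leq \operatorname{GL}_d(\mathbb{Z})$ be a subgroup such that the linear action of $\Gamma$ on $\mathbb{R}^d$ is irreducible and $\Gamma$ is generated by a finite set of unipotent matrices. Then for every $v \in \mathbb{Z}^d \setminus \{0\}$ there exist a sequence $\gamma_1, \gamma_2, \ldots \in \Gamma$ and polynomials $p_1(t), \ldots, p_d(t) \in \mathbb{Z}[t]$ such that $\gamma_n v = (p_1(n), \ldots, p_d(n))$ for all $n \geq 1$, and $1, p_1(t), \ldots, p_d(t)$ are linearly independent (i.e., no non-trivial linear combination of $p_1, \ldots, p_d$ is constant). In particular the sequence $(\gamma_n v)_n$ is not contained in any proper affine subspace of $\mathbb{R}^d$. *)

From HB Require Import structures.
From mathcomp Require Import all_boot all_order all_algebra.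
Set Implicit Arguments. Unset Strict Implicit. Unset Printing Implicit Defensive.
Import Order.TTheory GRing.Theory Num.Theory.
Local Open Scope ring_scope.

Definition unipotent (d : nat) (g : 'M[int]_d) : Prop :=
  exists k : nat, (g - 1%:M) ^+ k = 0.

Inductive gen_group (d : nat) (S : seq 'M[int]_d) : 'M[int]_d -> Prop :=
| gen_one : gen_group S 1%:M
| gen_mul g s : gen_group S g -> s \in S -> gen_group S (g *m s)
| gen_mulV g s : gen_group S g -> s \in S -> gen_group S (g *m invmx s).

Definition mxR (R : pzRingType) (d : nat) (g : 'M[int]_d) : 'M[R]_d :=
  map_mx (fun z : int => z%:~R) g.

(* A subspace is
   encoded as the row space of U; its transposes (the column vectors) are
   invariant under v |-> g v iff (U *m g^T <= U)%MS. *)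
Definition irreducible_action (R : fieldType) (d : nat)
    (G : 'M[int]_d -> Prop) : Prop :=
  forall U : 'M[R]_d,
    (forall g, G g -> (U *m (mxR R g)^T <= U)%MS) ->
    U = 0 \/ row_full U.

From HB Require Import structures.
From mathcomp Require Import all_boot all_order all_algebra zify.
From Stdlib Require Import Classical.
Import Order.TTheory GRing.Theory Num.Theory.
Set Implicit Arguments. Unset Strict Implicit. Unset Printing Implicit Defensive.
Local Open Scope ring_scope.

(* Call a matrix P of integer polynomials a curve in Gamma if P(0) = 1 and
   P(n) is in Gamma for every natural n.  Curves are closed under
   t |-> A(t) B(t^M), and a unipotent generator u gives the curve
   t |-> u^(K! t) = sum_i 'C(K! t, i) (u - 1)^i.  For a curve P let V_P be the
   span of the vectors P(n) v - v, and pick P0 with V_P0 of maximal dimension.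
   Comparing P0 with the product curve t |-> P0(t) B(t^M) shows that every
   covector vanishing on V_P0 vanishes on V_B for each curve B; taking for B
   the curve of a generator u, and using that s |-> c (u^s w) is a polynomial
   in s, V_P0 is u-stable, hence Gamma-stable.  By irreducibility V_P0 is 0 or
   everything; if it were 0, Gamma would fix v and the line through v would be
   invariant.  So V_P0 is everything, which says that no nontrivial
   combination of the coordinates of t |-> P0(t) v is constant. *)

Lemma poly_nat_roots_eq0 (R : numDomainType) (N : nat) (p : {poly R}) :
  (size p <= N)%N -> (forall n, (n < N)%N -> p.[n%:R] = 0) -> p = 0.
Proof.
move=> size_p p_roots; apply/eqP/negPn/negP => p_neq0.
have := max_poly_roots p_neq0 (rs := [seq n%:R | n <- iota 0 N]).
rewrite size_map size_iota map_inj_uniq ?iota_uniq; last exact: mulrIn (oner_neq0 R).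
have -> : all (root p) [seq n%:R | n <- iota 0 N].
  by apply/allP => x /mapP [n]; rewrite mem_iota add0n => n_lt ->; apply/rootP/p_roots.
by move=> /(_ isT isT) /leq_trans /(_ size_p); rewrite ltnn.
Qed.

Lemma poly_nat_eq0 (R : numDomainType) (p : {poly R}) :
  (forall n : nat, p.[n%:R] = 0) -> p = 0.
Proof. by move=> p_roots; apply: (@poly_nat_roots_eq0 _ (size p)). Qed.

Lemma dvdn_fact_fact k n : (k <= n)%N -> (k`! %| n`!)%N.
Proof. by move=> le_kn; rewrite -(ffact_fact (leq_subr k n)) subKn // dvdn_mull. Qed.

Definition ffact_poly (R : nzRingType) k : {poly R} := \prod_(i < k) ('X - i%:R%:P).

Lemma ffact_polyE (R : comNzRingType) k n : (ffact_poly R k).[n%:R] = (n ^_ k)%:R.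
Proof.
rewrite horner_prod ffact_prod natr_prod.
have [lt_nk|le_kn] := ltnP n k.
  rewrite (bigD1 (Ordinal lt_nk)) //= [in RHS](bigD1 (Ordinal lt_nk)) //=.
  by rewrite hornerXsubC subrr subnn !mul0r.
apply: eq_bigr => i _; rewrite hornerXsubC natrB //.
exact: leq_trans (ltnW (ltn_ord i)) le_kn.
Qed.

Lemma size_ffact_poly (R : nzRingType) k : size (ffact_poly R k) = k.+1.
Proof. by rewrite size_prod_XsubC -[index_enum _]enumT -cardT card_ord. Qed.

Lemma map_ffact_poly (R : nzRingType) k :
  map_poly (intr : int -> R) (ffact_poly int k) = ffact_poly R k.
Proof.
by rewrite rmorph_prod; apply: eq_bigr => i _; rewrite /= map_polyXsubC rmorph_nat.
Qed.

(* ffact_poly k (m 'X) / k!, i.e. t |-> 'C(m t, k); its coefficients are integers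
   as soon as k! divides m. *)
Definition binom_poly (m k : nat) : {poly int} :=
  \poly_(j < k.+1) ((ffact_poly int k)`_j * ((m ^ j) %/ k`!)%N%:R).

Lemma binom_polyE (R : comNzRingType) m k (x : R) : (k`! %| m)%N ->
  (map_poly intr (binom_poly m k)).[x] *+ k`! = (ffact_poly R k).[m%:R * x].
Proof.
move=> dvd_m.
have size_binom : (size (map_poly (intr : int -> R) (binom_poly m k)) <= k.+1)%N.
  by rewrite map_polyE (leq_trans (size_Poly _)) // size_map size_poly.
rewrite (horner_coef_wide _ size_binom).
rewrite (horner_coef_wide _ (eq_leq (size_ffact_poly R k))) -map_ffact_poly.
rewrite -sumrMnl; apply: eq_bigr => j _.
rewrite !coef_map coef_poly ltn_ord exprMn -mulrnAl /= intrM mulrz_nat.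
have [->|j_gt0] := posnP j; last first.
  by rewrite -mulrnAr -mulr_natr -natrM divnK ?dvdn_exp // natrX mulrA.
have [->|k_gt0] := posnP k.
  by rewrite expn0 (_ : (1 %/ 0`!)%N = 1%N) // !expr0 !mulr1 mulr1n.
have ffact_coef0 : (ffact_poly int k)`_0 = 0.
  by rewrite -horner_coef0 -[0]/(0%:R) ffact_polyE ffact0n eqn0Ngt k_gt0.
by rewrite ffact_coef0 !(mul0r, mul0rn, mulr0z).
Qed.

Lemma binom_poly_nat m k (n : nat) : (k`! %| m)%N ->
  (binom_poly m k).[n%:Z] = 'C(m * n, k)%:R.
Proof.
move=> dvd_m; apply: (pmulrnI (fact_gt0 k)).
have := binom_polyE (n%:R : int) dvd_m; rewrite map_poly_id => [|z _]; last by rewrite intz.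
by rewrite -natrM natz => ->; rewrite ffact_polyE -bin_ffact natrM mulr_natr.
Qed.

Lemma binom_poly_invn (R : numFieldType) m k : (0 < m)%N -> (k`! %| m)%N ->
  (map_poly intr (binom_poly m k)).[m%:R^-1] = 'C(1, k)%:R :> R.
Proof.
move=> m_gt0 dvd_m; apply: (pmulrnI (fact_gt0 k)).
rewrite binom_polyE // mulfV ?pnatr_eq0 -?lt0n // (ffact_polyE R k 1).
by rewrite -bin_ffact natrM mulr_natr.
Qed.

Lemma sum_ord_widen (V : nmodType) (F : nat -> V) m n : (m <= n)%N ->
  (forall i, (m <= i < n)%N -> F i = 0) -> \sum_(i < m) F i = \sum_(i < n) F i.
Proof.
move=> le_mn F0; rewrite -!(big_mkord xpredT).
rewrite (@big_cat_nat _ _ _ m 0 n _ _ (leq0n m) le_mn) /=.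
by rewrite [X in _ + X]big1_seq ?addr0 // => i /andP [_]; rewrite mem_index_iota => /F0.
Qed.

Lemma exprD1n_nilpotent (R : pzSemiRingType) (N : R) K s : N ^+ K = 0 ->
  (N + 1) ^+ s = \sum_(i < K) N ^+ i *+ 'C(s, i).
Proof.
move=> NK0; pose F i := N ^+ i *+ 'C(s, i).
rewrite exprD1n (@sum_ord_widen _ F _ (maxn s.+1 K)) ?leq_maxl //; last first.
  by move=> i /andP [lt_si _]; rewrite /F bin_small.
rewrite [RHS](@sum_ord_widen _ F _ (maxn s.+1 K)) ?leq_maxr // => i /andP [le_Ki _].
by rewrite /F -(subnKC le_Ki) exprD NK0 mul0r mul0rn.
Qed.

Definition evalmx d (P : 'M[{poly int}]_d) (x : int) : 'M[int]_d :=
  map_mx (horner_eval x) P.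

Definition orbit_poly d (P : 'M[{poly int}]_d) (w : 'cV[int]_d) : 'cV[{poly int}]_d :=
  P *m map_mx polyC w.

Lemma evalmxM d (P Q : 'M[{poly int}]_d) x : evalmx (P *m Q) x = evalmx P x *m evalmx Q x.
Proof. exact: map_mxM. Qed.

Lemma evalmx_mulmx d (P : 'M[{poly int}]_d) w x :
  evalmx P x *m w = map_mx (horner_eval x) (orbit_poly P w).
Proof.
rewrite /orbit_poly map_mxM; congr (_ *m _); apply/matrixP => i j.
by rewrite !mxE /= horner_evalE hornerC.
Qed.

Lemma size_orbit_poly d (P : 'M[{poly int}]_d) M w :
  (forall i j, size (P i j) <= M)%N -> forall i, (size (orbit_poly P w i 0%R) <= M)%N.
Proof.
move=> size_P i; rewrite mxE; apply: leq_trans (size_sum _ _ _) _.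
apply/bigmax_leqP => j _; rewrite mxE mulrC mul_polyC.
exact: leq_trans (size_scale_leq _ _) (size_P i j).
Qed.

Definition unipotent_curve d (u : 'M[int]_d) K : 'M[{poly int}]_d :=
  \sum_(i < K) binom_poly K`! i *: map_mx polyC ((u - 1%:M) ^+ i).

Lemma evalmx_unipotent_curve d (u : 'M[int]_d) K (n : nat) : (u - 1%:M) ^+ K = 0 ->
  evalmx (unipotent_curve u K) n%:Z = u ^+ (K`! * n).
Proof.
move=> uK; transitivity ((u - 1%:M + 1) ^+ (K`! * n)); last by rewrite -idmxE subrK.
rewrite (exprD1n_nilpotent _ uK); apply/matrixP => a b.
rewrite mxE summxE /= horner_evalE horner_sum summxE; apply: eq_bigr => i _.
rewrite !mxE hornerM hornerC binom_poly_nat ?dvdn_fact_fact 1?ltnW //.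
by rewrite mulmxnE mulr_natl.
Qed.

Section IntegerVectorPairing.
Variables (R : numFieldType) (d : nat).
Implicit Types (c : 'cV[R]_d) (w : 'cV[int]_d) (p : 'cV[{poly int}]_d).

Definition dotz c w : R := \sum_i c i 0 * (w i 0)%:~R.

Fact dotz_is_zmod_morphism c : zmod_morphism (dotz c).
Proof.
by move=> w1 w2; rewrite /dotz -sumrB; apply: eq_bigr => i _; rewrite !mxE intrB mulrBr.
Qed.

HB.instance Definition _ c :=
  GRing.isZmodMorphism.Build _ _ (dotz c) (dotz_is_zmod_morphism c).

Lemma dotzZ c z w : dotz c (z *: w) = z%:~R * dotz c w.
Proof. by rewrite -[z in LHS]intz scaler_int raddfMz mulrzl. Qed.

Lemma dotz_trmx c (g : 'M[int]_d) w : dotz ((mxR R g)^T *m c) w = dotz c (g *m w).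
Proof.
rewrite /dotz; under eq_bigr => i _ do rewrite mxE mulr_suml.
rewrite exchange_big /=; apply: eq_bigr => l _.
rewrite mxE rmorph_sum mulr_sumr; apply: eq_bigr => i _.
by rewrite !mxE rmorphM /= mulrCA mulrA.
Qed.

Lemma dotz_delta (i : 'I_d) w : dotz (delta_mx i 0) w = (w i 0)%:~R.
Proof.
rewrite /dotz (bigD1 i) //= big1 ?addr0 => [|j ji]; first by rewrite mxE !eqxx mul1r.
by rewrite mxE (negbTE ji) mul0r.
Qed.

Lemma dotz_inj w1 w2 : (forall c, dotz c w1 = dotz c w2) -> w1 = w2.
Proof.
move=> eq_dotz; apply/matrixP => i j; rewrite [j]ord1.
by apply: (@intr_inj R); rewrite -!dotz_delta.
Qed.

Definition dotz_poly c p : {poly R} :=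
  \sum_i c i 0 *: map_poly intr (p i 0).

Lemma dotz_polyE c p (x : int) :
  (dotz_poly c p).[x%:~R] = dotz c (map_mx (horner_eval x) p).
Proof.
rewrite /dotz_poly horner_sum; apply: eq_bigr => i _.
by rewrite hornerZ mxE /= horner_map.
Qed.

Lemma size_dotz_poly c p M :
  (forall i, size (p i 0%R) <= M)%N -> (size (dotz_poly c p) <= M)%N.
Proof.
move=> size_p; apply: leq_trans (size_sum _ _ _) _; apply/bigmax_leqP => i _.
apply: leq_trans (size_scale_leq _ _) _.
by rewrite size_map_inj_poly //; apply: intr_inj.
Qed.

End IntegerVectorPairing.

Lemma dotz_unipotent_expr (R : numFieldType) d (u : 'M[int]_d) K (c : 'cV[R]_d) w s :
  (u - 1%:M) ^+ K = 0 ->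
  dotz c (u ^+ s *m w) = \sum_(i < K) dotz c ((u - 1%:M) ^+ i *m w) * 'C(s, i)%:R.
Proof.
move=> uK; have -> : u ^+ s = (u - 1%:M + 1) ^+ s by rewrite -idmxE subrK.
rewrite (exprD1n_nilpotent _ uK) mulmx_suml raddf_sum /=.
by apply: eq_bigr => i _; rewrite -scaler_nat -scalemxAl dotzZ mulrC natz.
Qed.

(* s |-> dotz c (u^s w) is a polynomial in s; if it is constant on the
   multiples of K!, it is constant, in particular at s = 1. *)
Lemma dotz_unipotent_const (R : numFieldType) d (u : 'M[int]_d) K (c : 'cV[R]_d) w b :
  (u - 1%:M) ^+ K = 0 ->
  (forall k : nat, dotz c (u ^+ (K`! * k) *m w) = b) -> dotz c (u *m w) = b.
Proof.
move=> uK const_b.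
pose H := \sum_(i < K) dotz c ((u - 1%:M) ^+ i *m w) *: map_poly intr (binom_poly K`! i).
have H_nat k : H.[k%:R] = b.
  rewrite -(const_b k) (dotz_unipotent_expr _ _ _ uK) horner_sum; apply: eq_bigr => i _.
  rewrite hornerZ -[k%:R]/((k%:Z)%:~R) horner_map /=.
  by rewrite binom_poly_nat ?dvdn_fact_fact ?(ltnW (ltn_ord i)) // rmorph_nat.
have -> : b = H.[K`!%:R^-1].
  have /eqP : H - b%:P = 0 by apply: poly_nat_eq0 => k; rewrite !hornerE H_nat subrr.
  by rewrite subr_eq0 => /eqP ->; rewrite hornerC.
rewrite -[u in dotz c (u *m w)]expr1 (dotz_unipotent_expr _ _ _ uK) horner_sum.
apply: eq_bigr => i _.
by rewrite hornerZ binom_poly_invn ?fact_gt0 ?dvdn_fact_fact ?(ltnW (ltn_ord i)).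
Qed.

Lemma coef_block_sum (R : nzSemiRingType) M J (a : nat -> {poly R}) j r :
  (forall i, size (a i) <= M)%N -> (j < J)%N -> (r < M)%N ->
  (\sum_(i < J) 'X^(M * i) * a i)`_(M * j + r) = (a j)`_r.
Proof.
move=> size_a lt_jJ lt_rM; rewrite coef_sum (bigD1 (Ordinal lt_jJ)) //= coefXnM.
rewrite ltnNge leq_addr addKn /= big1 ?addr0 // => i ij; rewrite coefXnM.
case: ltnP => // le_Mi; apply: nth_default; apply: leq_trans (size_a i) _.
have M_gt0 : (0 < M)%N by apply: leq_ltn_trans lt_rM.
have le_ij : (i <= j)%N.
  by rewrite -ltnS -(ltn_pmul2l M_gt0) mulnS (leq_ltn_trans le_Mi) // addnC ltn_add2r.
have lt_ij : (i < j)%N.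
  by rewrite ltn_neqAle le_ij andbT; apply: contra ij => /eqP eq_ij; apply/eqP/val_inj.
have : (M * i.+1 <= M * j)%N by rewrite leq_mul2l lt_ij orbT.
rewrite mulnS; lia.
Qed.

Lemma block_sum_constP (R : nzSemiRingType) M J (a : nat -> {poly R}) b :
  (0 < M)%N -> (forall i, size (a i) <= M)%N ->
  \sum_(i < J) 'X^(M * i) * a i = b%:P ->
  forall j, (j < J)%N -> a j = if j == 0%N then b%:P else 0.
Proof.
move=> M_gt0 size_a sum_b j lt_jJ; apply/polyP => r.
have [lt_rM|le_Mr] := ltnP r M; last first.
  rewrite nth_default ?(leq_trans (size_a j)) //.
  by case: eqP; rewrite ?coefC ?coef0 // gtn_eqF // (leq_trans M_gt0).
rewrite -(coef_block_sum size_a lt_jJ lt_rM) sum_b !coefC addn_eq0 muln_eq0.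
by rewrite eqn0Ngt M_gt0 /=; case: eqP; rewrite ?coefC ?coef0 //; case: (r == 0%N).
Qed.

Lemma gen_groupM d (S : seq 'M[int]_d) g h :
  gen_group S g -> gen_group S h -> gen_group S (g *m h).
Proof.
move=> Sg; elim=> [|h' s _ IH Ss|h' s _ IH Ss]; first by rewrite mulmx1.
  by rewrite mulmxA; apply: gen_mul.
by rewrite mulmxA; apply: gen_mulV.
Qed.

Lemma gen_groupX d (S : seq 'M[int]_d) s k : s \in S -> gen_group S (s ^+ k).
Proof.
move=> Ss; elim: k => [|k IH]; first by rewrite expr0 -idmxE; apply: gen_one.
by rewrite exprSr -mulmxE; apply: gen_mul.
Qed.

Definition gen_curve d (S : seq 'M[int]_d) (P : 'M[{poly int}]_d) : Prop :=
  evalmx P 0 = 1%:M /\ forall n : nat, gen_group S (evalmx P n%:Z).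

Lemma gen_curve1 d (S : seq 'M[int]_d) : gen_curve S 1%:M.
Proof. by split=> [|n]; rewrite /evalmx map_mx1 //; apply: gen_one. Qed.

Lemma gen_curve_unipotent d (S : seq 'M[int]_d) s K :
  s \in S -> (s - 1%:M) ^+ K = 0 -> gen_curve S (unipotent_curve s K).
Proof.
move=> Ss sK; split=> [|n]; last by rewrite evalmx_unipotent_curve //; apply: gen_groupX.
by rewrite (evalmx_unipotent_curve 0 sK) muln0 expr0 idmxE.
Qed.

Definition dotz_const (R : numFieldType) d (v : 'cV[int]_d) (P : 'M[{poly int}]_d)
    (c : 'cV[R]_d) : Prop :=
  forall n : nat, dotz c (evalmx P n%:Z *m v) = dotz c v.

Lemma map_horner_eval_coef (R : comNzRingType) m n (p : 'M[{poly R}]_(m, n)) J x :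
  (forall i j, size (p i j) <= J)%N ->
  map_mx (horner_eval x) p = \sum_(k < J) x ^+ k *: map_mx (coefp k) p.
Proof.
move=> size_p; apply/matrixP => i j; rewrite mxE summxE /= horner_evalE.
by rewrite (horner_coef_wide _ (size_p i j)); apply: eq_bigr => k _; rewrite !mxE mulrC.
Qed.

Lemma evalmx_comp_Xn d (P : 'M[{poly int}]_d) M x :
  evalmx (map_mx (fun q => q \Po 'X^M) P) x = evalmx P (x ^+ M).
Proof. by apply/matrixP => i j; rewrite !mxE /= !horner_evalE horner_comp hornerXn. Qed.

(* With M above the degrees in A, c (A(t) B(t^M) v) = sum_j t^(jM) a_j(t)
   determines each a_j(t), the coefficient of s^j in c (A(t) B(s) v). *)
Lemma gen_curve_mul (R : numFieldType) d (S : seq 'M[int]_d) (v : 'cV[int]_d) A B :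
  gen_curve S A -> gen_curve S B ->
  exists Q, gen_curve S Q /\ forall c : 'cV[R]_d, dotz_const v Q c ->
    dotz_const v A c /\
    forall k t : nat, dotz c (evalmx A k%:Z *m (evalmx B t%:Z *m v)) = dotz c v.
Proof.
move=> [A0 A_gen] [B0 B_gen].
pose M := (\max_(ij : 'I_d * 'I_d) size (A ij.1 ij.2)).+1.
pose J := (\max_i size (orbit_poly B v i 0%R)).+1.
pose Q := A *m map_mx (fun q => q \Po 'X^M) B.
have evalQ x : evalmx Q x = evalmx A x *m evalmx B (x ^+ M).
  by rewrite evalmxM evalmx_comp_Xn.
exists Q; split.
  split=> [|n]; first by rewrite evalQ expr0n /= A0 B0 mul1mx.
  by rewrite evalQ -[n%:Z]natz -natrX !natz; apply: gen_groupM (A_gen n) (B_gen _).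
move=> c Q_const.
pose b j := map_mx (coefp j) (orbit_poly B v).
have B_expand (t : int) : evalmx B t *m v = \sum_(j < J) t ^+ j *: b j.
  rewrite evalmx_mulmx (map_horner_eval_coef _ (J := J)) // => i j.
  by rewrite [j]ord1; apply/leqW; exact: (leq_bigmax i).
have b0 : b 0%N = v.
  apply/matrixP => i j; rewrite -[in RHS](mul1mx v) -B0 evalmx_mulmx !mxE /=.
  by rewrite horner_evalE horner_coef0.
pose a j := dotz_poly c (orbit_poly A (b j)).
have a_eval (x : int) j : (a j).[x%:~R] = dotz c (evalmx A x *m b j).
  by rewrite dotz_polyE evalmx_mulmx.
have size_a j : (size (a j) <= M)%N.
  apply/size_dotz_poly/size_orbit_poly => i l.
  by rewrite ltnW // ltnS (leq_bigmax (i, l)).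
have a_const : \sum_(j < J) 'X^(M * j) * a j = (dotz c v)%:P.
  apply/eqP; rewrite -subr_eq0; apply/eqP/poly_nat_eq0 => n.
  apply/eqP; rewrite hornerD hornerN hornerC subr_eq0 -(Q_const n) evalQ -mulmxA.
  rewrite B_expand mulmx_sumr raddf_sum horner_sum; apply/eqP/eq_bigr => j _ /=.
  by rewrite -scalemxAr dotzZ !hornerE -(a_eval n%:Z) exprM !rmorphXn.
have aE := block_sum_constP (ltn0Sn _) size_a a_const.
have A_const : dotz_const v A c.
  by move=> n; rewrite -[v in _ *m v]b0 -a_eval aE // hornerC.
split=> // k t; rewrite B_expand mulmx_sumr raddf_sum big_ord_recl /= big1 ?addr0.
  by rewrite expr0 scale1r b0 A_const.
move=> j _; rewrite -scalemxAr dotzZ -a_eval aE ?horner0 ?mulr0 //.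
by rewrite /bump /= add1n ltnS ltn_ord.
Qed.

Lemma mxRM (R : pzRingType) d (A B : 'M[int]_d) : mxR R (A *m B) = mxR R A *m mxR R B.
Proof. exact: map_mxM. Qed.

Lemma mxR1 (R : pzRingType) d : mxR R (1%:M : 'M[int]_d) = 1%:M.
Proof. exact: map_mx1. Qed.

Lemma unipotent_unitmx d (u : 'M[int]_d) : unipotent u -> u \in unitmx.
Proof.
move=> [K uK]; have uK' : (1%:M - u) ^+ K = 0 by rewrite -opprB exprNn uK mulr0.
have := subrX1 (1%:M - u) K; rewrite uK' sub0r idmxE addrAC subrr add0r mulNr.
move=> /oppr_inj u_inv; have u_rinv : u *m (\sum_(i < K) (1 - u) ^+ i) = 1%:M.
  by rewrite mulmxE -u_inv idmxE.
exact: (mulmx1_unit u_rinv).1.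
Qed.

Lemma stablemx_rinv (F : fieldType) m n (V : 'M[F]_(m, n)) (f g : 'M[F]_n) :
  f *m g = 1%:M -> stablemx V f -> stablemx V g.
Proof.
move=> fg1 Vf; have f_unit := (mulmx1_unit fg1).1.
have rank_Vf : \rank (V *m f) = \rank V by rewrite mxrankMfree ?row_free_unit.
have V_sub : (V <= V *m f)%MS by rewrite -(mxrank_leqif_sup Vf).2 rank_Vf eqxx.
by apply: submx_trans (submxMr _ V_sub) _; rewrite -mulmxA fg1 mulmx1.
Qed.

Lemma gen_group_stablemx (F : fieldType) m d (S : seq 'M[int]_d) (V : 'M[F]_(m, d)) :
  (forall s, s \in S -> unipotent s) ->
  (forall s, s \in S -> stablemx V (mxR F s)^T) ->
  forall g, gen_group S g -> stablemx V (mxR F g)^T.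
Proof.
move=> S_unip S_stable g; elim=> [|h s _ IH Ss|h s _ IH Ss].
- by rewrite mxR1 trmx1; apply: stablemxC.
- by rewrite mxRM trmx_mul; apply: stablemxM (S_stable s Ss) IH.
rewrite mxRM trmx_mul; apply: stablemxM IH; apply: stablemx_rinv (S_stable s Ss).
rewrite -trmx_mul -mxRM mulVmx ?(unipotent_unitmx (S_unip s Ss)) //.
by apply: (canLR trmxK); rewrite trmx1; apply: mxR1.
Qed.

Lemma submx_of_ker (F : fieldType) m1 m2 n (X : 'M[F]_(m1, n)) (Y : 'M[F]_(m2, n)) :
  (forall c : 'cV_n, Y *m c = 0 -> X *m c = 0) -> (X <= Y)%MS.
Proof.
move=> kerYX; rewrite submxE; apply/eqP/matrixP => i j.
have Y_coker : Y *m (cokermx Y *m delta_mx j (0 : 'I_1)) = 0.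
  by rewrite mulmxA mulmx_coker mul0mx.
have := congr1 (fun A : 'M_(m1, 1) => A i 0) (kerYX _ Y_coker).
by rewrite /= mulmxA -colE !mxE.
Qed.

Definition orbit_deg d (v : 'cV[int]_d) (P : 'M[{poly int}]_d) : nat :=
  (\max_i size (orbit_poly P v i 0%R)).+1.

(* orbit_deg v P rows suffice: they exceed the degree of t |-> c (P(t) v - v). *)
Definition orbit_diffmx (R : numFieldType) d (v : 'cV[int]_d) (P : 'M[{poly int}]_d) :
    'M[R]_(orbit_deg v P, d) :=
  \matrix_(n, i) ((evalmx P n%:Z *m v - v) i 0)%:~R.

Lemma orbit_diffmx_kerP (R : numFieldType) d v P (c : 'cV[R]_d) :
  orbit_diffmx R v P *m c = 0 <-> dotz_const v P c.
Proof.
have diffE n : (orbit_diffmx R v P *m c) n 0 = dotz c (evalmx P n%:Z *m v) - dotz c v.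
  by rewrite -raddfB mxE; apply: eq_bigr => i _; rewrite mxE mulrC.
split=> [ker_c|const_c]; last first.
  by apply/matrixP => n j; rewrite [j]ord1 diffE const_c subrr mxE.
pose f := dotz_poly c (orbit_poly P v) - (dotz c v)%:P.
have fE n : f.[n%:R] = dotz c (evalmx P n%:Z *m v) - dotz c v.
  by rewrite hornerD hornerN hornerC (dotz_polyE _ _ n%:Z) evalmx_mulmx.
have f0 : f = 0.
  apply: (@poly_nat_roots_eq0 _ (orbit_deg v P)) => [|n lt_n].
    rewrite (leq_trans (size_polyD _ _)) // geq_max size_polyN size_polyC.
    rewrite (leq_trans (leq_b1 _)) ?andbT //; apply/size_dotz_poly => i.
    by apply/leqW; exact: (leq_bigmax i).
  by rewrite fE -(diffE (Ordinal lt_n)) ker_c mxE.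
by move=> n; apply/eqP; rewrite -subr_eq0 -fE f0 horner0.
Qed.

Lemma ex_maximizer (T : Type) (A : T -> Prop) (f : T -> nat) m :
  (exists x, A x) -> (forall x, A x -> (f x <= m)%N) ->
  exists2 x, A x & forall y, A y -> (f y <= f x)%N.
Proof.
move=> [x Ax] f_bounded; move: {2}(m - f x)%N (leqnn (m - f x)) => n.
elim: n x Ax => [|n IH] x Ax le_mfx.
  by exists x => // y /f_bounded; have := f_bounded x Ax; lia.
have [[y [Ay lt_xy]]|] := classic (exists y, A y /\ (f x < f y)%N).
  by apply: (IH y Ay); have := f_bounded y Ay; lia.
move=> no_bigger; exists x => // y Ay; rewrite leqNgt; apply/negP => lt_xy.
by apply: no_bigger; exists y.
Qed.

Lemma fixed_vector_reducible (R : numFieldType) d (G : 'M[int]_d -> Prop) (v : 'cV[int]_d) :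
  (2 <= d)%N -> v != 0 -> (forall g, G g -> g *m v = v) -> ~ irreducible_action R G.
Proof.
move=> d_ge2 v_neq0 G_fix G_irr; pose i0 : 'I_d := Ordinal (ltnW d_ge2).
pose U : 'M[R]_d := \matrix_(i, j) (v j 0)%:~R.
have U_stable g : G g -> stablemx U (mxR R g)^T.
  move=> Gg; rewrite (_ : U *m _ = U) ?submx_refl //.
  apply/matrixP => i j; rewrite !mxE -(G_fix g Gg) mxE rmorph_sum; apply: eq_bigr => l _.
  by rewrite !mxE rmorphM mulrC.
have [U0|U_full] := G_irr U U_stable.
  move/negP: v_neq0; apply; apply/eqP/matrixP => j k; rewrite [k]ord1 mxE.
  by have := congr1 (fun A : 'M[R]_d => A i0 j) U0; rewrite !mxE => /eqP; rewrite intr_eq0 => /eqP.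
have : (\rank U <= 1)%N.
  have -> : U = const_mx 1 *m (\row_j (v j 0)%:~R : 'rV[R]_d).
    by apply/matrixP => i j; rewrite !mxE big_ord1 !mxE mul1r.
  by rewrite (leq_trans (mxrankM_maxl _ _)) ?rank_leq_col.
by move: U_full; rewrite /row_full => /eqP ->; lia.
Qed.

Lemma irreducible_row_full (F : fieldType) m d (G : 'M[int]_d -> Prop) (W : 'M[F]_(m, d)) :
  irreducible_action F G -> (forall g, G g -> stablemx W (mxR F g)^T) -> W != 0 ->
  row_full W.
Proof.
move=> G_irr W_stable W_neq0; rewrite -(eq_row_full (genmxE W)).
have genW_stable g : G g -> stablemx <<W>>%MS (mxR F g)^T.
  by move=> Gg; rewrite (eqmxMr _ (genmxE _)) !genmxE W_stable.
case: (G_irr _ genW_stable) => // genW0.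
by move: W_neq0; rewrite -mxrank_eq0 -mxrank_gen genW0 mxrank0.
Qed.

Section MaximalCurve.
Variables (R : numFieldType) (d : nat) (S : seq 'M[int]_d) (v : 'cV[int]_d).
Hypothesis S_unipotent : forall s, s \in S -> unipotent s.
Variable P0 : 'M[{poly int}]_d.
Hypothesis P0_curve : gen_curve S P0.
Hypothesis P0_max : forall P, gen_curve S P ->
  (\rank (orbit_diffmx R v P) <= \rank (orbit_diffmx R v P0))%N.

Let W := orbit_diffmx R v P0.

Lemma max_curve_const (c : 'cV[R]_d) : dotz_const v P0 c ->
  forall P, gen_curve S P -> dotz_const v P c.
Proof.
move=> P0_c P P_curve; have [Q [Q_curve Q_const]] := gen_curve_mul R v P0_curve P_curve.
have sub_WQ : (W <= orbit_diffmx R v Q)%MS.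
  apply: submx_of_ker => c' /orbit_diffmx_kerP Q_c'.
  exact/orbit_diffmx_kerP/(Q_const c' Q_c').1.
have /submxP [X WQ] : (orbit_diffmx R v Q <= W)%MS.
  by rewrite -(mxrank_leqif_sup sub_WQ).2 eqn_leq (mxrank_leqif_sup sub_WQ).1 P0_max.
have Q_c : dotz_const v Q c.
  by apply/orbit_diffmx_kerP; rewrite WQ -mulmxA (orbit_diffmx_kerP _ _ _).2 ?mulmx0.
by move=> t; have := (Q_const c Q_c).2 0%N t; rewrite P0_curve.1 mul1mx.
Qed.

Lemma max_curve_generator (c : 'cV[R]_d) s : s \in S -> dotz_const v P0 c ->
  forall t : nat, dotz c (s *m (evalmx P0 t%:Z *m v)) = dotz c v.
Proof.
move=> Ss P0_c t; have [K sK] := S_unipotent Ss.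
have [Q [Q_curve Q_const]] := gen_curve_mul R v (gen_curve_unipotent Ss sK) P0_curve.
apply: (dotz_unipotent_const sK) => k.
by rewrite -(evalmx_unipotent_curve _ sK) (Q_const c (max_curve_const P0_c Q_curve)).2.
Qed.

Lemma max_curve_diffmx_stable g : gen_group S g -> stablemx W (mxR R g)^T.
Proof.
apply: gen_group_stablemx => // s Ss; apply: submx_of_ker => c /orbit_diffmx_kerP P0_c.
rewrite -mulmxA; apply/orbit_diffmx_kerP => n; rewrite !dotz_trmx.
by rewrite !max_curve_generator // -[v in s *m v]mul1mx -P0_curve.1 max_curve_generator.
Qed.

Lemma max_curve_diffmx0_fixed : W = 0 -> forall g, gen_group S g -> g *m v = v.
Proof.
move=> W0; have const_all (c : 'cV[R]_d) : dotz_const v P0 c.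
  by apply/orbit_diffmx_kerP; rewrite -/W W0 mul0mx.
have fix_S s : s \in S -> s *m v = v.
  move=> Ss; apply: (@dotz_inj R) => c.
  by rewrite -[v in s *m v]mul1mx -P0_curve.1 max_curve_generator.
move=> g; elim=> [|h s _ IH Ss|h s _ IH Ss]; first by rewrite mul1mx.
  by rewrite -mulmxA fix_S.
have s_unit := unipotent_unitmx (S_unipotent Ss).
have sV_v : invmx s *m v = v by rewrite -{1}(fix_S s Ss) mulmxA mulVmx ?mul1mx.
by rewrite -mulmxA sV_v.
Qed.

Lemma max_curve_diffmx_row_full :
  (2 <= d)%N -> v != 0 -> irreducible_action R (gen_group S) -> row_full W.
Proof.
move=> d_ge2 v_neq0 S_irr; apply: (irreducible_row_full S_irr max_curve_diffmx_stable).
apply/eqP => W0.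
exact: fixed_vector_reducible d_ge2 v_neq0 (max_curve_diffmx0_fixed W0) S_irr.
Qed.

End MaximalCurve.

Lemma dotz_const_int_comb (R : numFieldType) d (v : 'cV[int]_d) P (c : 'I_d -> int) :
  evalmx P 0 = 1%:M -> (size (\sum_i c i *: orbit_poly P v i 0)%R <= 1)%N ->
  dotz_const v P (\col_i (c i)%:~R : 'cV[R]_d).
Proof.
move=> P0 /size1_polyC const_q n; rewrite -[in RHS](mul1mx v) -P0.
have dotzE x : dotz (\col_i (c i)%:~R) (evalmx P x *m v) =
    (\sum_i c i *: orbit_poly P v i 0).[x]%:~R :> R.
  rewrite evalmx_mulmx /dotz horner_sum rmorph_sum; apply: eq_bigr => i _.
  by rewrite !mxE hornerZ rmorphM.
by rewrite !dotzE const_q !hornerC.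
Qed.

Theorem theorem2p1 (R : rcfType) (d : nat) (hd : (2 <= d)%N)
    (S : seq 'M[int]_d)
    (hS : forall s, s \in S -> unipotent s)
    (hirr : irreducible_action R (gen_group S))
    (v : 'cV[int]_d) (hv : v != 0) :
  exists (gamma : nat -> 'M[int]_d) (p : 'I_d -> {poly int}),
    (forall n, gen_group S (gamma n)) /\
    (forall n : nat, (1 <= n)%N ->
       gamma n *m v = \col_i (p i).[n%:Z]) /\
    (forall c : 'I_d -> int,
       (size (\sum_i c i *: p i)%R <= 1)%N -> forall i, c i = 0).
Proof.
have [P0 P0_curve P0_max] : exists2 P0, gen_curve S P0 &
    forall P, gen_curve S P -> (\rank (orbit_diffmx R v P) <= \rank (orbit_diffmx R v P0))%N.
  apply: (@ex_maximizer _ _ _ d); first by exists 1%:M; apply: gen_curve1.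
  by move=> P _; exact: rank_leq_col.
have W_full := max_curve_diffmx_row_full hS P0_curve P0_max hd hv hirr.
exists (fun n => evalmx P0 n%:Z), (fun i => orbit_poly P0 v i 0).
split; first exact: P0_curve.2.
split=> [n _|c size_c i].
  by rewrite evalmx_mulmx; apply/matrixP => i j; rewrite [j]ord1 !mxE.
have /orbit_diffmx_kerP := dotz_const_int_comb R P0_curve.1 size_c.
rewrite -(mulmx0 _ (orbit_diffmx R v P0)) => /(row_full_inj W_full) /matrixP /(_ i 0).
by rewrite !mxE => /eqP; rewrite intr_eq0 => /eqP.
Qed.
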